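(* For every fixed $\beta>0$, the function $\lambda\mapsto UB(\beta,\lambda)$ is strictly decreasing on $(0,\infty)$.
   Context: $\phi$ and $\Phi$ denote the standard normal density and distribution function. For $\lambda>0$ and $\beta\ge 0$ set $n=\lambda+\beta\sqrt{\lambda}$, $\rho=\lambda/n$, $a=\sqrt{-2n(1-\rho+\ln\rho)}$ (note $1-\rho+\ln\rho\le 0$), and $\gamma=(n-\lambda)/\sqrt{n}=\beta\sqrt{\rho}$. Define $UB(\beta,\lambda)=\left[\rho+\gamma\left(\frac{\Phi(a)}{\phi(a)}+\frac{2}{3\sqrt{n}}\right)\right]^{-1}$. *)

From Stdlib Require Import Reals Lra.
Open Scope R_scope.

Definition phi (x : R) : R := exp (- (x ^ 2) / 2) / sqrt (2 * PI).

Lemma phi_continuous : continuity phi.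
Proof.
  intro x. unfold phi, Rdiv.
  apply continuity_pt_mult.
  - apply continuity_pt_comp with (f1 := fun x => - (x ^ 2) * / 2).
    + apply continuity_pt_mult.
      * apply continuity_pt_opp. apply derivable_continuous_pt.
        apply derivable_pt_pow.
      * apply continuity_pt_const. intros a b; reflexivity.
    + apply derivable_continuous_pt, derivable_pt_exp.
  - apply continuity_pt_const. intros a b; reflexivity.
Qed.

Lemma phi_integrable (a b : R) : Riemann_integrable phi a b.
Proof.
  destruct (Rle_dec a b) as [H|H].
  - apply continuity_implies_RiemannInt; auto. intros; apply phi_continuous.
  - apply RiemannInt_P1. apply continuity_implies_RiemannInt; [lra|].
    intros; apply phi_continuous.
Qed.

(* standard normal distribution function:
   Phi(a) = 1/2 + \int_0^a phi  (= \int_{-infty}^a phi since phi is even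
   with total mass 1) *)
Definition Phi (a : R) : R := / 2 + RiemannInt (phi_integrable 0 a).

Definition UB (beta lambda : R) : R :=
  let n := lambda + beta * sqrt lambda in
  let rho := lambda / n in
  let a := sqrt (- 2 * n * (1 - rho + ln rho)) in
  let gamma := (n - lambda) / sqrt n in
  / (rho + gamma * (Phi a / phi a + 2 / (3 * sqrt n))).

From Stdlib Require Import Reals Lra Psatz.
From Coquelicot Require Import Coquelicot.
Open Scope R_scope.

(* Substitute lambda = s^2.  Then n = s(s+beta), rho = s/(s+beta),
   gamma = beta sqrt rho and rho + 2 gamma/(3 sqrt n) = 1 - beta/(3(s+beta)),
   so that 1/UB = 1 - beta/(3(s+beta)) + beta sqrt(s/(s+beta)) * Phi a/phi a
   with a^2/2 = s(s+beta) ln(1+beta/s) - beta s.  The first summand strictly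
   increases with s, the factor beta sqrt(s/(s+beta)) is nonnegative and
   increasing, a increases with s (its derivative reduces to the Pade bound
   ln(1+u) >= 2u/(2+u)), and Phi/phi is positive and increasing on [0,oo)
   because Phi increases and phi decreases there. *)

Lemma ln_1p_ge_pade u : 0 <= u -> 2 * u <= (2 + u) * ln (1 + u).
Proof.
  intros Hu.
  destruct (Req_dec u 0) as [->|Hu0].
  { rewrite !Rplus_0_r, ln_1. lra. }
  destruct (MVT_cor2 (fun x => ln (1 + x) - 2 * x / (2 + x))
                     (fun x => 1 / (1 + x) - 4 / (2 + x) ^ 2) 0 u)
    as [c [Hmvt Hc]]; [lra| |].
  { intros c Hc. apply is_derive_Reals. auto_derive; [lra|]. field. lra. }
  assert (Hderiv : 0 <= 1 / (1 + c) - 4 / (2 + c) ^ 2).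
  { replace (1 / (1 + c) - 4 / (2 + c) ^ 2) with (c ^ 2 / ((1 + c) * (2 + c) ^ 2))
      by (field; lra).
    apply Rmult_le_pos; [nra|]. apply Rlt_le, Rinv_0_lt_compat. nra. }
  rewrite Rplus_0_r, ln_1 in Hmvt.
  replace (2 * 0 / (2 + 0)) with 0 in Hmvt by field.
  assert (Hdiv : 2 * u / (2 + u) <= ln (1 + u)) by nra.
  apply (Rmult_le_compat_l (2 + u)) in Hdiv; [|lra].
  replace ((2 + u) * (2 * u / (2 + u))) with (2 * u) in Hdiv by (field; lra).
  exact Hdiv.
Qed.

(* [a^2 / 2] as a function of [s = sqrt lambda]. *)
Definition half_a_sq (b s : R) : R := s * (s + b) * (ln (s + b) - ln s) - b * s.

Lemma half_a_sq_le b s1 s2 : 0 < b -> 0 < s1 -> s1 < s2 ->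
  half_a_sq b s1 <= half_a_sq b s2.
Proof.
  intros Hb Hs1 Hs12.
  destruct (MVT_cor2 (half_a_sq b) (fun c => (2 * c + b) * (ln (c + b) - ln c) - 2 * b)
                     s1 s2) as [c [Hmvt Hc]]; [lra| |].
  { intros c Hc. apply is_derive_Reals. unfold half_a_sq. auto_derive; [lra|].
    field. lra. }
  assert (Hlog : ln (c + b) - ln c = ln (1 + b / c)).
  { replace (c + b) with (c * (1 + b / c)) by (field; lra).
    assert (0 < b / c) by (apply Rdiv_lt_0_compat; lra).
    rewrite ln_mult by lra. ring. }
  assert (Hderiv : 0 <= (2 * c + b) * (ln (c + b) - ln c) - 2 * b).
  { rewrite Hlog.
    assert (Hu : 0 <= b / c) by (apply Rlt_le, Rdiv_lt_0_compat; lra).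
    pose proof (ln_1p_ge_pade _ Hu).
    replace ((2 * c + b) * ln (1 + b / c) - 2 * b)
      with (c * ((2 + b / c) * ln (1 + b / c) - 2 * (b / c))) by (field; lra).
    apply Rmult_le_pos; lra. }
  nra.
Qed.

Lemma phi_pos a : 0 < phi a.
Proof.
  unfold phi. apply Rdiv_lt_0_compat; [apply exp_pos|].
  apply sqrt_lt_R0. pose proof PI_RGT_0. lra.
Qed.

Lemma phi_le a1 a2 : 0 <= a1 <= a2 -> phi a2 <= phi a1.
Proof.
  intros Ha. unfold phi, Rdiv. apply Rmult_le_compat_r.
  { left. apply Rinv_0_lt_compat, sqrt_lt_R0. pose proof PI_RGT_0. lra. }
  destruct (Rle_lt_or_eq_dec a1 a2) as [Hlt|Heq]; [lra| |].
  - left. apply exp_increasing. nra.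
  - subst. lra.
Qed.

Lemma Phi_le a1 a2 : a1 <= a2 -> Phi a1 <= Phi a2.
Proof.
  intros Ha. unfold Phi.
  rewrite <- (RiemannInt_P26 (phi_integrable 0 a1) (phi_integrable a1 a2)
                             (phi_integrable 0 a2)).
  assert (Hconst : RiemannInt (RiemannInt_P14 a1 a2 0) <= RiemannInt (phi_integrable a1 a2)).
  { apply RiemannInt_P19; [exact Ha|]. intros x _. left. apply phi_pos. }
  rewrite (RiemannInt_P15 (RiemannInt_P14 a1 a2 0)) in Hconst.
  lra.
Qed.

Lemma Phi_ge_half a : 0 <= a -> / 2 <= Phi a.
Proof.
  intros Ha.
  assert (HPhi0 : Phi 0 = / 2).
  { unfold Phi.
    pose proof (RiemannInt_P26 (phi_integrable 0 0) (phi_integrable 0 0)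
                               (phi_integrable 0 0)). lra. }
  rewrite <- HPhi0. now apply Phi_le.
Qed.

Lemma Phi_div_phi_gt0 a : 0 <= a -> 0 < Phi a / phi a.
Proof.
  intros Ha. apply Rdiv_lt_0_compat; [pose proof (Phi_ge_half a Ha); lra|].
  apply phi_pos.
Qed.

Lemma Phi_div_phi_le a1 a2 : 0 <= a1 <= a2 -> Phi a1 / phi a1 <= Phi a2 / phi a2.
Proof.
  intros Ha.
  pose proof (phi_pos a1). pose proof (phi_pos a2). pose proof (phi_le _ _ Ha).
  pose proof (Phi_ge_half a1 (proj1 Ha)). pose proof (Phi_le a1 a2 (proj2 Ha)).
  unfold Rdiv. apply Rmult_le_compat; try lra.
  - left. apply Rinv_0_lt_compat. lra.
  - apply Rinv_le_contravar; lra.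
Qed.

Lemma gamma_at_sq b s : 0 < b -> 0 < s ->
  b * s / sqrt (s * s + b * s) = b * sqrt (s / (s + b)).
Proof.
  intros Hb Hs.
  assert (Hn : 0 < sqrt (s * s + b * s)) by (apply sqrt_lt_R0; nra).
  assert (Hroot : sqrt (s / (s + b)) * sqrt (s * s + b * s) = s).
  { rewrite <- sqrt_mult_alt by (apply Rlt_le, Rdiv_lt_0_compat; lra).
    replace (s / (s + b) * (s * s + b * s)) with (s * s) by (field; lra).
    apply sqrt_square. lra. }
  apply (Rmult_eq_reg_r (sqrt (s * s + b * s))); [|lra].
  rewrite Rmult_assoc, Hroot. field. lra.
Qed.

Lemma UB_sq b s : 0 < b -> 0 < s ->
  UB b (s * s) = / (1 - b / (3 * (s + b)) + b * sqrt (s / (s + b)) *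
    (Phi (sqrt (2 * half_a_sq b s)) / phi (sqrt (2 * half_a_sq b s)))).
Proof.
  intros Hb Hs. unfold UB. cbv zeta.
  rewrite sqrt_square by lra.
  assert (Ha : - 2 * (s * s + b * s) * (1 - s * s / (s * s + b * s)
                 + ln (s * s / (s * s + b * s))) = 2 * half_a_sq b s).
  { unfold half_a_sq.
    replace (s * s + b * s) with (s * (s + b)) by ring.
    rewrite ln_div, !ln_mult by nra. field. lra. }
  rewrite Ha, <- gamma_at_sq by lra.
  set (M := Phi (sqrt (2 * half_a_sq b s)) / phi (sqrt (2 * half_a_sq b s))).
  assert (Hn : sqrt (s * s + b * s) * sqrt (s * s + b * s) = s * s + b * s)
    by (apply sqrt_sqrt; nra).
  assert (Hn0 : 0 < sqrt (s * s + b * s)) by (apply sqrt_lt_R0; nra).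
  f_equal.
  replace (s * s + b * s - s * s) with (b * s) by ring.
  rewrite Rmult_plus_distr_l.
  replace (b * s / sqrt (s * s + b * s) * (2 / (3 * sqrt (s * s + b * s))))
    with (2 * (b * s) / (3 * (sqrt (s * s + b * s) * sqrt (s * s + b * s))))
    by (field; lra).
  rewrite Hn. field. nra.
Qed.

Lemma one_sub_div_lt b s1 s2 : 0 < b -> 0 < s1 -> s1 < s2 ->
  1 - b / (3 * (s1 + b)) < 1 - b / (3 * (s2 + b)).
Proof.
  intros Hb Hs1 Hs12.
  enough (b / (3 * (s2 + b)) < b / (3 * (s1 + b))) by lra.
  apply Rmult_lt_compat_l; [lra|]. apply Rinv_lt_contravar; nra.
Qed.

Lemma sqrt_div_add_le b s1 s2 : 0 < b -> 0 < s1 -> s1 < s2 ->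
  sqrt (s1 / (s1 + b)) <= sqrt (s2 / (s2 + b)).
Proof.
  intros Hb Hs1 Hs12. apply sqrt_le_1_alt.
  apply (Rmult_le_reg_r ((s1 + b) * (s2 + b))); [nra|].
  replace (s1 / (s1 + b) * ((s1 + b) * (s2 + b))) with (s1 * (s2 + b)) by (field; lra).
  replace (s2 / (s2 + b) * ((s1 + b) * (s2 + b))) with (s2 * (s1 + b)) by (field; lra).
  nra.
Qed.

Lemma Rinv_add_mul_lt b A1 A2 c1 c2 M1 M2 :
  0 < b -> 0 < A1 < A2 -> 0 <= c1 <= c2 -> 0 <= M1 <= M2 ->
  / (A2 + b * c2 * M2) < / (A1 + b * c1 * M1).
Proof.
  intros Hb HA Hc HM.
  assert (Hprod : c1 * M1 <= c2 * M2) by (apply Rmult_le_compat; lra).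
  assert (Hprod0 : 0 <= c1 * M1) by (apply Rmult_le_pos; lra).
  apply Rinv_lt_contravar; [apply Rmult_lt_0_compat|]; nra.
Qed.

Theorem lemma1 (beta : R) (hbeta : 0 < beta) :
  forall l1 l2 : R, 0 < l1 -> l1 < l2 -> UB beta l2 < UB beta l1.
Proof.
  intros l1 l2 H1 H12.
  set (s1 := sqrt l1). set (s2 := sqrt l2).
  assert (Hs1 : 0 < s1) by (apply sqrt_lt_R0; lra).
  assert (Hs12 : s1 < s2) by (apply sqrt_lt_1; lra).
  replace l1 with (s1 * s1) by (apply sqrt_sqrt; lra).
  replace l2 with (s2 * s2) by (apply sqrt_sqrt; lra).
  rewrite !UB_sq by lra.
  assert (Ha : 0 <= sqrt (2 * half_a_sq beta s1) <= sqrt (2 * half_a_sq beta s2)).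
  { split; [apply sqrt_pos|]. apply sqrt_le_1_alt.
    pose proof (half_a_sq_le beta s1 s2 hbeta Hs1 Hs12). lra. }
  apply Rinv_add_mul_lt; [exact hbeta | split | split | split].
  - replace (1 - beta / (3 * (s1 + beta))) with ((3 * s1 + 2 * beta) / (3 * (s1 + beta)))
      by (field; lra).
    apply Rdiv_lt_0_compat; lra.
  - exact (one_sub_div_lt beta s1 s2 hbeta Hs1 Hs12).
  - apply sqrt_pos.
  - exact (sqrt_div_add_le beta s1 s2 hbeta Hs1 Hs12).
  - apply Rlt_le, Phi_div_phi_gt0, Ha.
  - exact (Phi_div_phi_le _ _ Ha).
Qed.
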